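(* Fix parameters $T>0$, $T_f>0$, $f_e>0$, $c_0>0$, $W>0$, a probability density $f$ on $(0,\infty)$, and a number $D_e\ge 0$ with $T-\frac{c_0D_e}{f_e}>0$. Define $$N(D_e)=\left\lceil \frac{Tf_e-c_0D_e}{T_f f_e}\right\rceil,\qquad t_1(D_e)=\Big(T-\frac{c_0D_e}{f_e}\Big)-\Big\lceil \Big(T-\frac{c_0D_e}{f_e}\Big)/T_f\Big\rceil T_f+T_f ,$$ and for $d\ge 0$, $h>0$, $t>0$ let $e(d,h,t,W)=\frac{t\,(e^{d/(tW)}-1)}{h}$. Define recursively, for $d\ge 0$ and $h>0$, $$J_1(d,h)=e(d,h,t_1(D_e),W),\qquad J_n(d)=\int_0^\infty J_n(d,h)f(h)\,dh\ (n\ge 1),$$ $$J_n(d,h)=\min_{0\le x\le d}\Big(e(x,h,T_f,W)+J_{n-1}(d-x)\Big)\quad (n\ge 2).$$ Then for every $n\in\{1,2,\dots,N(D_e)-1\}$, the function $d\mapsto J_n(d)$ is convex on $[0,D_e]$, and for every $h>0$ the function $d\mapsto J_n(d,h)$ is convex on $[0,D_e]$.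
   Context: Model: a mobile device offloads $D_e$ data nats to a base station over block-fading blocks of duration $T_f$, indexed backwards so that offloading starts in block $N(D_e)$ and ends in block $1$; the base station needs time $c_0D_e/f_e$ to compute, so transmission must finish within $T-c_0D_e/f_e$; block $1$ has transmission time $t_1(D_e)\in(0,T_f]$ and all other blocks have transmission time $T_f$. The normalized channel gain $h$ is i.i.d. across blocks with density $f$. $e(d,h,t,W)$ is the energy to send $d$ nats in time $t$ over bandwidth $W$ with normalized gain $h$ (Shannon capacity). $J_n(d)$ is the minimal expected energy to send $d$ nats over blocks $n,\dots,1$ and $J_n(d,h)$ the same conditioned on the gain $h$ in block $n$. The functions $J_n$ take values in $[0,+\infty]$ (the minimum is understood as an infimum), and convexity is meant in the usual sense for extended-real-valued functions. *)

From HB Require Import structures.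
From mathcomp Require Import all_boot all_order all_algebra.
From mathcomp Require Import all_classical all_reals all_analysis.
Set Implicit Arguments. Unset Strict Implicit. Unset Printing Implicit Defensive.
Import Order.TTheory GRing.Theory Num.Theory.
Local Open Scope classical_set_scope.
Local Open Scope ring_scope.

Section Offload.
Variable R : realType.

Definition energy (d h t W : R) : R := t * (expR (d / (t * W)) - 1) / h.

Definition Nblocks (T Tf fe c0 De : R) : int :=
  Num.ceil ((T * fe - c0 * De) / (Tf * fe)).

Definition t1 (T Tf fe c0 De : R) : R :=
  let T' := T - c0 * De / fe in
  T' - (Num.ceil (T' / Tf))%:~R * Tf + Tf.

Definition expect (f : R -> R) (g : R -> \bar R) : \bar R :=
  (\int[lebesgue_measure]_(h in `]0%R, +oo[) (g h * (f h)%:E))%E.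

(* Jh n d h = J_n(d,h) ; J_0 is never used (set to 0). *)
Fixpoint Jh (T Tf fe c0 W De : R) (f : R -> R) (n : nat) : R -> R -> \bar R :=
  match n with
  | 0%N => fun _ _ => 0%E
  | 1%N => fun d h => (energy d h (t1 T Tf fe c0 De) W)%:E
  | m.+1 => fun d h =>
      ereal_inf [set ((energy x h Tf W)%:E
                       + expect f (Jh T Tf fe c0 W De f m (d - x)))%E
                | x in `[0, d]]
  end.

Definition Jd (T Tf fe c0 W De : R) (f : R -> R) (n : nat) (d : R) : \bar R :=
  expect f (Jh T Tf fe c0 W De f n d).

Definition convex_on_0D (D : R) (g : R -> \bar R) : Prop :=
  forall x y (l : R), x \in `[0, D] -> y \in `[0, D] -> 0 < l < 1 ->
    (g (l * x + (1 - l) * y)%R <= l%:E * g x + (1 - l)%:E * g y)%E.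

Definition prob_density (f : R -> R) : Prop :=
  measurable_fun (`]0%R, +oo[ : set R) f /\ (forall h, 0 < h -> 0 <= f h) /\
  (\int[lebesgue_measure]_(h in `]0%R, +oo[) (f h)%:E = 1)%E.

End Offload.

From HB Require Import structures.
From mathcomp Require Import all_boot all_order all_algebra.
From mathcomp Require Import all_classical all_reals all_analysis.
From mathcomp Require Import ring lra measurable_realfun.
Set Implicit Arguments. Unset Strict Implicit. Unset Printing Implicit Defensive.
Import Order.TTheory GRing.Theory Num.Theory.
Local Open Scope classical_set_scope.
Local Open Scope ring_scope.

(* Convexity propagates backwards through the recursion.  The energy
   e(d,h,t,W) = (t/h)(exp(d/(tW)) - 1) is convex in d.  Averaging over the gain
   preserves convexity, because the integral is linear and monotone on
   nonnegative integrands (which are measurable in h, being nonincreasing in h).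
   The recursion step d |-> inf_{0<=x<=d} e(x) + G(d-x) preserves convexity of a
   nonnegative convex G: mixing splits x1 of d1 and y1 of d2 with weight l gives
   a split of the mixed point whose cost is at most the mixed costs. *)

Section energy.
Variable R : realType.
Implicit Types (x y d h t W l : R).

Lemma t1_gt0 (T Tf fe c0 De : R) : 0 < Tf -> 0 < t1 T Tf fe c0 De.
Proof.
move=> Tf_gt0; rewrite /t1; set T' := T - c0 * De / fe.
have := ceilB1_lt (T' / Tf); rewrite intrB ltr_pdivlMr //; lra.
Qed.

Lemma energy_ge0 d h t W : 0 <= d -> 0 <= t -> 0 <= h -> 0 <= W ->
  0 <= energy d h t W.
Proof.
move=> d_ge0 t_ge0 h_ge0 W_ge0.
have exp_ge1 : 1 <= expR (d / (t * W)).
  by rewrite -expR0 ler_expR divr_ge0 // mulr_ge0.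
by rewrite /energy divr_ge0 // mulr_ge0 // subr_ge0.
Qed.

Lemma energy_nonincreasing d t W h1 h2 : 0 <= d -> 0 <= t -> 0 <= W ->
  0 < h1 -> h1 <= h2 -> energy d h2 t W <= energy d h1 t W.
Proof.
move=> d_ge0 t_ge0 W_ge0 h1_gt0 h12; have h2_gt0 := lt_le_trans h1_gt0 h12.
have := @energy_ge0 d 1 t W d_ge0 t_ge0 ler01 W_ge0; rewrite /energy divr1 => num_ge0.
by rewrite ler_wpM2l // lef_pV2.
Qed.

Lemma expR_convex_comb (u v l : R) : 0 <= l <= 1 ->
  expR (l * u + (1 - l) * v) <= l * expR u + (1 - l) * expR v.
Proof. by case/andP => l_ge0 l_le1; exact: (convex_expR (Itv01 l_ge0 l_le1)). Qed.

Lemma energy_convex_comb x y h t W l : 0 <= t -> 0 <= h -> 0 <= l <= 1 ->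
  energy (l * x + (1 - l) * y) h t W <=
  l * energy x h t W + (1 - l) * energy y h t W.
Proof.
move=> t_ge0 h_ge0 /[dup] l01 /andP[l_ge0 l_le1].
rewrite /energy !(mulrAC t _ h^-1) mulrDl -!(mulrA _ _ (t * W)^-1).
have := expR_convex_comb (x / (t * W)) (y / (t * W)) l01.
have : 0 <= t / h by rewrite divr_ge0.
move: (t / h) (expR (x / _)) (expR (y / _)) (expR (_ + _)) => k eu ev ez.
nra.
Qed.

End energy.

Section ereal_inf_conv.
Variable R : realType.
Local Open Scope ereal_scope.

Lemma le_conv_ereal_inf (A B : set \bar R) (c : \bar R) (l : R) :
  (0 < l < 1)%R -> (forall a, A a -> 0 <= a) -> (forall b, B b -> 0 <= b) ->
  (forall a b, A a -> B b -> c <= l%:E * a + (1 - l)%:E * b) ->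
  c <= l%:E * ereal_inf A + (1 - l)%:E * ereal_inf B.
Proof.
move=> /andP[l_gt0 l_lt1] A_ge0 B_ge0 c_le.
have l'_gt0 : (0 < 1 - l)%R by rewrite subr_gt0.
have infA_ge0 : 0 <= ereal_inf A by apply/ereal_infP.
have infB_ge0 : 0 <= ereal_inf B by apply/ereal_infP.
have comb_neqNy k x : (0 <= k)%R -> 0 <= x -> k%:E * x != -oo.
  by move=> k_ge0 x_ge0; rewrite gt_eqF // (lt_le_trans ltNy0) // mule_ge0.
have [->|A_fin] := eqVneq (ereal_inf A) +oo.
  by rewrite gt0_muley ?lte_fin // addye ?leey // comb_neqNy // ltW.
have [->|B_fin] := eqVneq (ereal_inf B) +oo.
  by rewrite gt0_muley ?lte_fin // addey ?leey // comb_neqNy // ltW.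
have {}A_fin : ereal_inf A \is a fin_num by rewrite ge0_fin_numE // ltey.
have {}B_fin : ereal_inf B \is a fin_num by rewrite ge0_fin_numE // ltey.
apply/lee_addgt0Pr => e e_gt0.
have [a Aa a_lt] := lb_ereal_inf_adherent e_gt0 A_fin.
have [b Bb b_lt] := lb_ereal_inf_adherent e_gt0 B_fin.
apply: (le_trans (c_le a b Aa Bb)).
move: A_fin B_fin a_lt b_lt (A_ge0 a Aa) (B_ge0 b Bb) => {Aa Bb}.
move: (ereal_inf A) (ereal_inf B) a b => [ia| |] [ib| |] // [a| |] [b| |] //= _ _.
rewrite -!EFinM -!EFinD !lte_fin !lee_fin; nra.
Qed.
End ereal_inf_conv.

Section inf_conv.
Variable R : realType.

Definition inf_conv (e : R -> R) (G : R -> \bar R) (d : R) : \bar R :=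
  ereal_inf [set ((e x)%:E + G (d - x)%R)%E | x in `[0, d]].

Local Open Scope ereal_scope.

Variables (D : R) (e : R -> R) (G : R -> \bar R).
Hypotheses (e_ge0 : forall x, (0 <= x)%R -> (0 <= e x)%R)
  (e_convex : forall x y l, (0 < l < 1)%R ->
     (e (l * x + (1 - l) * y) <= l * e x + (1 - l) * e y)%R)
  (G_ge0 : forall x, x \in `[0%R, D] -> 0 <= G x)
  (G_convex : convex_on_0D D G).

Lemma inf_conv_convex : convex_on_0D D (inf_conv e G).
Proof.
move=> x y l; rewrite !in_itv /= => /andP[x_ge0 x_le] /andP[y_ge0 y_le] l01.
have /andP[l_gt0 l_lt1] := l01.
have split_ge0 d z : `[0%R, d]%classic z -> (d <= D)%R -> 0 <= (e z)%:E + G (d - z).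
  rewrite /= in_itv /= => /andP[z_ge0 z_le] d_le.
  by rewrite adde_ge0 ?lee_fin ?e_ge0 // G_ge0 // in_itv /= subr_ge0 z_le lerBlDr
    (le_trans d_le) // lerDl.
apply: le_conv_ereal_inf => //.
- by move=> _ [z z_in <-]; exact: split_ge0.
- by move=> _ [z z_in <-]; exact: split_ge0.
move=> _ _ [x1 + <-] [y1 + <-]; rewrite /= !in_itv /=.
move=> /andP[x1_ge0 x1_le] /andP[y1_ge0 y1_le].
pose w := (l * x1 + (1 - l) * y1)%R.
have w_in : `[0%R, (l * x + (1 - l) * y)%R]%classic w.
  rewrite /= in_itv /= addr_ge0 ?mulr_ge0 //=; [|lra|lra].
  by rewrite lerD // ler_wpM2l //; lra.
apply: le_trans; first by apply: ereal_inf_lbound; exists w.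
have -> : (l * x + (1 - l) * y - w = l * (x - x1) + (1 - l) * (y - y1))%R.
  by rewrite /w; ring.
have xx1_in : (x - x1)%R \in `[0%R, D] by rewrite in_itv /=; apply/andP; lra.
have yy1_in : (y - y1)%R \in `[0%R, D] by rewrite in_itv /=; apply/andP; lra.
have G_le := G_convex xx1_in yy1_in l01.
have e_le := e_convex x1 y1 l01.
have Gx_ge0 := G_ge0 xx1_in; have Gy_ge0 := G_ge0 yy1_in.
have ex_ge0 := e_ge0 x1_ge0; have ey_ge0 := e_ge0 y1_ge0.
rewrite !ge0_muleDr ?lee_fin // addeACA.
by apply: leeD => //; rewrite -!EFinM -EFinD lee_fin.
Qed.

End inf_conv.

Lemma nonincreasing_emeasurable (R : realType) (D : set R) (g : R -> \bar R) :
  is_interval D -> {in D &, {homo g : x y / (x <= y)%R >-> (y <= x)%E}} ->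
  measurable_fun D g.
Proof.
move=> D_itv g_ni; apply: (measurability _ (ErealGenOInfty.measurableE R)).
move=> _ [_ [r ->] <-]; apply: is_interval_measurable.
move=> x y [Dx _] [Dy gy] z xzy; have Dz := D_itv _ _ Dx Dy _ xzy.
split => //=; move: gy; rewrite /= !in_itv /= !andbT => /lt_le_trans; apply.
by case/andP: xzy => _ zy; apply: g_ni; rewrite ?inE.
Qed.

Section expectation.
Variables (R : realType) (f : R -> R).
Local Notation Rpos := (`]0%R, +oo[%classic : set R).
Hypotheses (f_meas : measurable_fun Rpos f)
  (f_ge0 : forall h, 0 < h -> 0 <= f h).
Local Open Scope ereal_scope.

Let pos_itv h : Rpos h -> (0 < h)%R.
Proof. by rewrite /= in_itv /= andbT. Qed.

Lemma expect_ge0 (g : R -> \bar R) : (forall h, (0 < h)%R -> 0 <= g h) ->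
  0 <= expect f g.
Proof.
move=> g_ge0; apply: integral_ge0 => h /pos_itv h_gt0.
by rewrite mule_ge0 ?g_ge0 // lee_fin f_ge0.
Qed.

Lemma expect_convex (D : R) (g : R -> R -> \bar R) :
  (forall d h, d \in `[0%R, D] -> (0 < h)%R -> 0 <= g d h) ->
  (forall d, d \in `[0%R, D] -> measurable_fun Rpos (g d)) ->
  (forall h, (0 < h)%R -> convex_on_0D D (g ^~ h)) ->
  convex_on_0D D (fun d => expect f (g d)).
Proof.
move=> g_ge0 g_meas g_convex x y l x_in y_in l01.
have /andP[l_gt0 l_lt1] := l01.
have z_in : (l * x + (1 - l) * y)%R \in `[0%R, D].
  by move: x_in y_in; rewrite !in_itv /= => /andP[? ?] /andP[? ?]; apply/andP; nra.
pose F d h := g d h * (f h)%:E.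
have F_ge0 d : d \in `[0%R, D] -> forall h, Rpos h -> 0 <= F d h.
  by move=> d_in h /pos_itv h_gt0; rewrite mule_ge0 ?g_ge0 // lee_fin f_ge0.
have F_meas d : d \in `[0%R, D] -> measurable_fun Rpos (F d).
  by move=> d_in; apply: emeasurable_funM; [exact: g_meas|exact/measurable_EFinP].
have kF_ge0 k d : (0 <= k)%R -> d \in `[0%R, D] ->
    forall h, Rpos h -> 0 <= k%:E * F d h.
  by move=> k_ge0 d_in h h_pos; rewrite mule_ge0 ?F_ge0.
have kF_meas k d : d \in `[0%R, D] -> measurable_fun Rpos (fun h => k%:E * F d h).
  by move=> d_in; apply: measurable_funeM; exact: F_meas.
have l_ge0 : (0 <= l)%R by lra.
have l'_ge0 : (0 <= 1 - l)%R by lra.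
apply: (@le_trans _ _ (\int[lebesgue_measure]_(h in Rpos)
    (l%:E * F x h + (1 - l)%:E * F y h))).
  apply: ge0_le_integral => //; first exact: F_ge0 z_in.
  - exact: F_meas z_in.
  - by apply: emeasurable_funD; [exact: kF_meas x_in|exact: kF_meas y_in].
  move=> h /pos_itv h_gt0; rewrite /F !muleA -ge0_muleDl ?mule_ge0 ?g_ge0 ?lee_fin //.
  by apply: lee_wpmul2r; [rewrite lee_fin f_ge0 | exact: g_convex].
rewrite ge0_integralD //.
- rewrite ge0_integralZl_EFin //; [|exact: F_ge0 x_in|exact: F_meas x_in].
  by rewrite ge0_integralZl_EFin //; [exact: F_ge0 y_in|exact: F_meas y_in].
- exact: kF_ge0 l_ge0 x_in.
- exact: kF_meas x_in.
- exact: kF_ge0 l'_ge0 y_in.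
- exact: kF_meas y_in.
Qed.
End expectation.

Section offloading.
Variables (R : realType) (T Tf fe c0 W De : R) (f : R -> R).
Local Notation Rpos := (`]0%R, +oo[%classic : set R).
Hypotheses (Tf_gt0 : 0 < Tf) (W_ge0 : 0 <= W)
  (f_meas : measurable_fun Rpos f) (f_ge0 : forall h, 0 < h -> 0 <= f h).
Local Notation J := (Jh T Tf fe c0 W De f).
Let t1_ge0 : 0 <= t1 T Tf fe c0 De := ltW (t1_gt0 T fe c0 De Tf_gt0).

Lemma JhSS m d h :
  J m.+2 d h = inf_conv (fun x => energy x h Tf W) (Jd T Tf fe c0 W De f m.+1) d.
Proof. by []. Qed.

Lemma Jh_ge0 n d h : 0 <= d -> 0 < h -> (0 <= J n d h)%E.
Proof.
elim: n d h => [|[|m] IH] d h d_ge0 h_gt0 //.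
  by rewrite /= lee_fin energy_ge0 // ltW.
rewrite JhSS; apply/ereal_infP => _ [x /= + <-]; rewrite in_itv /= => /andP[x_ge0 x_le].
apply: adde_ge0; first by rewrite lee_fin energy_ge0 // ltW.
by apply: expect_ge0 => // h' h'_gt0; rewrite IH ?subr_ge0.
Qed.

Lemma Jh_nonincreasing n d : 0 <= d ->
  {in Rpos &, {homo J n d : h1 h2 / h1 <= h2 >-> (h2 <= h1)%E}}.
Proof.
move=> d_ge0 h1 h2; rewrite !inE /= !in_itv /= !andbT => h1_gt0 _ h12.
case: n => [|[|m]] //.
  by rewrite /= lee_fin energy_nonincreasing.
rewrite !JhSS; apply/ereal_infP => _ [x x_in <-].
apply: le_trans; first by apply: ereal_inf_lbound; exists x.
move: x_in; rewrite /= in_itv /= => /andP[x_ge0 _].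
by rewrite leeD2r // lee_fin energy_nonincreasing // ltW.
Qed.

Lemma Jh_measurable n d : 0 <= d -> measurable_fun Rpos (J n d).
Proof.
by move=> d_ge0; apply: nonincreasing_emeasurable;
  [exact: interval_is_interval | exact: Jh_nonincreasing].
Qed.

Lemma Jd_convex n : (forall h, 0 < h -> convex_on_0D De (fun d => J n d h)) ->
  convex_on_0D De (Jd T Tf fe c0 W De f n).
Proof.
move=> J_convex; apply: expect_convex => //.
- by move=> d h; rewrite in_itv /= => /andP[d_ge0 _]; exact: Jh_ge0.
- by move=> d; rewrite in_itv /= => /andP[d_ge0 _]; exact: Jh_measurable.
Qed.

Lemma Jh_convex n h : (1 <= n)%N -> 0 < h -> convex_on_0D De (fun d => J n d h).
Proof.
have e_convex t h' : 0 <= t -> 0 < h' -> forall x y l, 0 < l < 1 ->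
    energy (l * x + (1 - l) * y) h' t W <= l * energy x h' t W + (1 - l) * energy y h' t W.
  by move=> t_ge0 h'_gt0 x y l /andP[l_gt0 l_lt1]; apply: energy_convex_comb => //; rewrite ?ltW.
case: n => // n _; elim: n h => [|n IH] h h_gt0.
  by move=> x y l _ _ l01; rewrite -!EFinM -EFinD lee_fin e_convex.
have e_ge0 x : 0 <= x -> 0 <= energy x h Tf W by move=> x_ge0; rewrite energy_ge0 // ltW.
have G_ge0 d : d \in `[0, De] -> (0 <= Jd T Tf fe c0 W De f n.+1 d)%E.
  by rewrite in_itv /= => /andP[d_ge0 _]; apply: expect_ge0 => // h' h'_gt0; exact: Jh_ge0.
move=> x y l; exact: (inf_conv_convex e_ge0 (e_convex _ _ (ltW Tf_gt0) h_gt0) G_ge0 (Jd_convex IH)).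
Qed.

End offloading.

Theorem lemma1 (R : realType) (T Tf fe c0 W De : R) (f : R -> R)
  (hT : 0 < T) (hTf : 0 < Tf) (hfe : 0 < fe) (hc0 : 0 < c0) (hW : 0 < W)
  (hf : prob_density f) (hDe : 0 <= De) (hTDe : 0 < T - c0 * De / fe) :
  forall n : nat, (1 <= n)%N -> (n%:Z < Nblocks T Tf fe c0 De)%R ->
    convex_on_0D De (Jd T Tf fe c0 W De f n) /\
    (forall h : R, 0 < h -> convex_on_0D De (fun d => Jh T Tf fe c0 W De f n d h)).
Proof.
move=> n n_ge1 _; have [f_meas [f_ge0 _]] := hf.
have Jh_cvx h : 0 < h -> convex_on_0D De (fun d => Jh T Tf fe c0 W De f n d h).
  by move=> h_gt0; apply: Jh_convex => //; exact: ltW.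
by split=> //; apply: Jd_convex => //; exact: ltW.
Qed.
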